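(* If a twice-marked graph $(G,u,v)$ has torsion order $2$ and every divisor on $G$ is submodular, then $(G,u,v)$ has $2$-general transmission.
   Context: A graph is a finite, connected, loopless multigraph (parallel edges allowed); its genus is $g=|E(G)|-|V(G)|+1$. A divisor is an element of the free abelian group on $V(G)$. Linear equivalence $\sim$ is generated by chip-firing (firing $w$ subtracts $\mathrm{val}(w)$ chips from $w$ and adds to each other vertex the number of edges joining it to $w$). The rank $r(D)$ is $-1$ if $D$ is not equivalent to an effective divisor, else the largest $r\ge0$ such that $D-E$ is equivalent to an effective divisor for every effective $E$ of degree $r$. $\delta(P)$ is $1$ if $P$ holds and $0$ otherwise. A twice-marked graph $(G,u,v)$ is a graph with two chosen vertices; its torsion order is the least $k\ge1$ with $ku\sim kv$. A twist of $D$ is $D+au+bv$. $\Delta(D)=r(D)-r(D-u)-r(D-v)+r(D-u-v)$. $D$ is submodular if $\Delta(D')\ge0$ for all twists $D'$. If $D$ is submodular, its transmission permutation $\tau^{u,v}_D$ is the unique bijection $\mathbb Z\to\mathbb Z$ with $\delta(\tau^{u,v}_D(b)=a)=\Delta(D+au-bv)$ for all $a,b$. An inversion of a bijection $\tau$ is a pair $(a,b)$ with $a<b$, $\tau(a)>\tau(b)$; two inversions $(a,b),(a',b')$ are $k$-equivalent if $a-a'=b-b'\equiv0\pmod k$; $\mathrm{inv}_k(\tau)$ is the number of classes. A genus-$g$ twice-marked graph has $k$-general transmission if $ku\sim kv$, every divisor is submodular, and $\mathrm{inv}_k(\tau^{u,v}_D)\le g$ for every divisor $D$. *)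

From mathcomp Require Import all_boot all_order all_algebra.
From mathcomp Require Import boolp.
Set Implicit Arguments. Unset Strict Implicit. Unset Printing Implicit Defensive.
Import Order.TTheory GRing.Theory Num.Theory.
Local Open Scope ring_scope.

Section ChipFiring.
Variable V : finType.
(* m x y = number of edges between x and y *)
Variable m : V -> V -> nat.

Definition is_graph : Prop :=
  [/\ forall x y, m x y = m y x,
      forall x, m x x = 0%N &
      forall x y, connect [rel a b | (0 < m a b)%N] x y].

Definition num_edges : nat := ((\sum_x \sum_y m x y) %/ 2)%N.

Definition genus : int := (num_edges%:Z - #|V|%:Z + 1).

Local Notation divisor := {ffun V -> int}.

Definition chip (w : V) : divisor := [ffun x => ((x == w) : nat)%:Z].

Definition valence (w : V) : nat := (\sum_x m w x)%N.

Definition fire (w : V) : divisor :=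
  [ffun x => (m w x)%:Z - (if x == w then (valence w)%:Z else 0)].

Definition lin_equiv (D D' : divisor) : Prop :=
  exists f : V -> int, D' = D + \sum_w fire w *~ f w.

Definition effective (D : divisor) : Prop := forall x, 0 <= D x.

Definition deg (D : divisor) : int := \sum_x D x.

Definition equiv_effective (D : divisor) : Prop :=
  exists E, effective E /\ lin_equiv D E.

Definition rank_ge (D : divisor) (r : nat) : Prop :=
  forall E, effective E -> deg E = r%:Z -> equiv_effective (D - E).

(* r(D) = -1 if D is not equivalent to an effective divisor, else the largest r
   with rank_ge D r; such r never exceeds deg D, hence the bounded max. *)
Definition rank (D : divisor) : int :=
  if `[< equiv_effective D >] then
    (\max_(r < `|deg D|.+1 | `[< rank_ge D r >]) (r : nat))%:Z
  else -1.

Definition Delta (u v : V) (D : divisor) : int :=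
  rank D - rank (D - chip u) - rank (D - chip v) + rank (D - chip u - chip v).

Definition submodular (u v : V) (D : divisor) : Prop :=
  forall a b : int, 0 <= Delta u v (D + chip u *~ a + chip v *~ b).

Definition is_transmission_perm (u v : V) (D : divisor) (tau : int -> int) : Prop :=
  bijective tau /\
  forall a b : int, ((tau b == a) : nat)%:Z = Delta u v (D + chip u *~ a - chip v *~ b).

Definition torsion_order (u v : V) (k : nat) : Prop :=
  [/\ (0 < k)%N,
      lin_equiv (chip u *+ k) (chip v *+ k) &
      forall j : nat, (0 < j)%N -> (j < k)%N ->
        ~ lin_equiv (chip u *+ j) (chip v *+ j)].

End ChipFiring.

Definition is_inversion (tau : int -> int) (p : int * int) : Prop :=
  p.1 < p.2 /\ tau p.2 < tau p.1.

Definition k_equiv (k : nat) (p q : int * int) : Prop :=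
  p.1 - q.1 = p.2 - q.2 /\ (k%:Z %| p.1 - q.1)%Z.

(* inv_k(tau) <= n : the k-equivalence classes of inversions of tau are at most n,
   i.e. some n inversions represent every class *)
Definition inv_k_le (k : nat) (tau : int -> int) (n : int) : Prop :=
  exists s : seq (int * int),
    (size s)%:Z <= n /\ (forall q, q \in s -> is_inversion tau q) /\
    forall p, is_inversion tau p -> exists2 q, q \in s & k_equiv k p q.

Definition general_transmission (V : finType) (m : V -> V -> nat) (u v : V) (k : nat) : Prop :=
  [/\ lin_equiv m (chip u *+ k) (chip v *+ k),
      forall D : {ffun V -> int}, submodular m u v D &
      forall D : {ffun V -> int}, exists tau,
        is_transmission_perm m u v D tau /\ inv_k_le k tau (genus m)].

(* Write R a b := r(D + a u - b v). Submodularity makes a |-> R a b - R a (b + 1) a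
   nondecreasing 0/1-valued step function, so each column of Delta, and by the symmetry
   exchanging u and v each row, contains at most one 1. It contains exactly one because
   Riemann's inequality r(E) >= deg E - g forces R to grow, while 2u ~ 2v turns steps in b
   into steps in a; this defines the bijection tau. Torsion also gives
   tau (b + 2) = tau b + 2, so every 2-class of inversions is represented by some
   (0, 2k + 1) or (1, 2k + 2), and there are at most g of these because
   tau b - tau (b + 1) <= 2g: below the jump of column b the rank grows by at most one per
   two units of a, against the growth forced by Riemann's inequality. Riemann's inequality
   itself is proved with q-reduced divisors, obtained by maximising an energy against a
   strict potential, and Dhar's burning algorithm. *)

From HB Require Import structures.
From mathcomp Require Import all_boot all_order all_algebra.
From mathcomp Require Import boolp zify ring.
Set Implicit Arguments. Unset Strict Implicit. Unset Printing Implicit Defensive.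
Import Order.TTheory GRing.Theory Num.Theory.
Local Open Scope ring_scope.

Lemma Posz_sum (I : Type) (r : seq I) (P : pred I) (F : I -> nat) :
  (\sum_(i <- r | P i) F i)%N%:Z = \sum_(i <- r | P i) (F i)%:Z.
Proof. exact: (big_morph Posz PoszD erefl). Qed.

(** * Divisors, linear equivalence and rank *)

Section Divisors.
Variable V : finType.
Local Notation divisor := {ffun V -> int}.
Implicit Types (D E F : divisor) (w : V).

(* Unlike [ffunE], this keeps the coordinates at type [int], which [lia] relies on. *)
Lemma divisorDE D E x : (D + E) x = D x + E x.
Proof. by rewrite ffunE. Qed.

Lemma deg_is_zmod_morphism : zmod_morphism (@deg V).
Proof. by move=> D E; rewrite /deg -sumrB; apply: eq_bigr => x _; rewrite !ffunE. Qed.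
HB.instance Definition _ := GRing.isZmodMorphism.Build _ _ (@deg V) deg_is_zmod_morphism.

Lemma deg_chip w : deg (chip w) = 1.
Proof.
rewrite /deg (bigD1 w) //= big1 ?addr0 => [|x /negbTE xw]; rewrite ffunE ?eqxx //.
by rewrite xw.
Qed.

Lemma effective0 : effective (0 : divisor).
Proof. by move=> x; rewrite ffunE. Qed.

Lemma effectiveD E F : effective E -> effective F -> effective (E + F).
Proof. by move=> hE hF x; rewrite ffunE addr_ge0. Qed.

Lemma effective_chipMn w n : effective (chip w *+ n).
Proof. by move=> x; rewrite ffunMnE ffunE mulrn_wge0. Qed.

Lemma effective_deg_ge0 E : effective E -> 0 <= deg E.
Proof. by move=> hE; apply: sumr_ge0 => x _; apply: hE. Qed.

Lemma effective_deg_eq0 E : effective E -> deg E = 0 -> E = 0.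
Proof.
move=> hE /eqP; rewrite psumr_eq0 => [/allP hE0|x _]; last exact: hE.
by apply/ffunP => x; rewrite ffunE; apply/eqP/hE0; rewrite mem_index_enum.
Qed.

End Divisors.

Section LinearEquivalence.
Variables (V : finType) (m : V -> V -> nat).
Local Notation divisor := {ffun V -> int}.
Implicit Types (D E F : divisor) (w : V).

Lemma sum_fireD (f g : V -> int) :
  \sum_w fire m w *~ (f w + g w) = \sum_w fire m w *~ f w + \sum_w fire m w *~ g w.
Proof. by rewrite -big_split; apply: eq_bigr => w _; rewrite mulrzDr. Qed.

Lemma deg_fire w : deg (fire m w) = 0.
Proof.
rewrite /deg (eq_bigr (fun x => (m w x)%:Z - (if x == w then (valence m w)%:Z else 0))).
  by rewrite sumrB -big_mkcond big_pred1_eq -Posz_sum subrr.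
by move=> x _; rewrite ffunE.
Qed.

Lemma lin_equiv_deg D E : lin_equiv m D E -> deg E = deg D.
Proof.
case=> f ->; rewrite raddfD raddf_sum big1 ?addr0 // => w _.
by rewrite raddfMz /= deg_fire mul0rz.
Qed.

Lemma lin_equiv_sym D E : lin_equiv m D E -> lin_equiv m E D.
Proof.
case=> f ->; exists (fun w => - f w).
by rewrite -addrA -sum_fireD big1 ?addr0 // => w _; rewrite subrr mulr0z.
Qed.

Lemma lin_equiv_trans D E F : lin_equiv m D E -> lin_equiv m E F -> lin_equiv m D F.
Proof. by case=> f -> [g ->]; exists (fun w => f w + g w); rewrite sum_fireD addrA. Qed.

Lemma lin_equivDr D E F : lin_equiv m D E -> lin_equiv m (D + F) (E + F).
Proof. by case=> f ->; exists f; rewrite addrAC. Qed.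

Lemma equiv_effective_lin_equiv D E :
  lin_equiv m D E -> equiv_effective m D -> equiv_effective m E.
Proof.
by move=> hDE [F [hF hDF]]; exists F; split=> //; apply: lin_equiv_trans (lin_equiv_sym hDE) hDF.
Qed.

Lemma equiv_effectiveD D E : equiv_effective m D -> effective E -> equiv_effective m (D + E).
Proof.
by move=> [F [hF hDF]] hE; exists (F + E); split; [apply: effectiveD | apply: lin_equivDr].
Qed.

Lemma equiv_effective_deg_ge0 D : equiv_effective m D -> 0 <= deg D.
Proof. by move=> [F [hF /lin_equiv_deg <-]]; apply: effective_deg_ge0. Qed.

End LinearEquivalence.

Section Rank.
Variables (V : finType) (m : V -> V -> nat).
(* Only witnesses that V is nonempty: on an empty graph [rank_ge] is not monotone in r. *)
Variable x0 : V.
Local Notation divisor := {ffun V -> int}.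
Implicit Types (D E : divisor) (w : V).

Lemma rank_ge0P D : rank_ge m D 0 <-> equiv_effective m D.
Proof.
split=> [h|h E hE /(effective_deg_eq0 hE) ->]; last by rewrite subr0.
by have := h 0 (@effective0 V); rewrite subr0; apply; rewrite raddf0.
Qed.

Lemma rank_ge_chip D r w : rank_ge m D r.+1 -> rank_ge m (D - chip w) r.
Proof.
move=> h E hE hdeg; rewrite addrAC -addrA -opprD.
apply: h; first exact: effectiveD (effective_chipMn w 1).
by rewrite raddfD /= deg_chip hdeg -addn1 PoszD.
Qed.

Lemma rank_geS D r : rank_ge m D r.+1 -> rank_ge m D r.
Proof.
move=> /(rank_ge_chip x0) h E hE hdeg.
by rewrite -[D](subrK (chip x0)) addrAC; apply: equiv_effectiveD (effective_chipMn x0 1); apply: h.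
Qed.

Lemma rank_ge_le D r s : (r <= s)%N -> rank_ge m D s -> rank_ge m D r.
Proof.
move=> /subnKC <-; elim: (s - r)%N => [|k IH]; first by rewrite addn0.
by rewrite addnS => /rank_geS.
Qed.

Lemma rank_ge_deg D r : rank_ge m D r -> r%:Z <= deg D.
Proof.
have hdeg : deg (chip x0 *+ r) = r%:Z by rewrite raddfMn /= deg_chip natz.
move=> /(_ _ (effective_chipMn x0 r) hdeg) /equiv_effective_deg_ge0.
by rewrite raddfB /= hdeg subr_ge0.
Qed.

Lemma rank_geN1 D : -1 <= rank m D.
Proof. by rewrite /rank; case: asboolP. Qed.

Lemma rank_geP D (r : nat) : r%:Z <= rank m D <-> rank_ge m D r.
Proof.
rewrite /rank; case: asboolP => hD; last first.
  by split=> // /(rank_ge_le (leq0n r)) /rank_ge0P.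
rewrite lez_nat; split=> [|h]; last first.
  have hr : (r < `|deg D|.+1)%N by have := rank_ge_deg h; lia.
  by apply: (@leq_bigmax_cond _ _ (fun i : 'I_ _ => nat_of_ord i) (Ordinal hr)); apply/asboolP.
case: r => [_|r hr]; first exact/rank_ge0P.
apply: contrapT => hn; move: hr; apply/negP; rewrite -ltnNge ltnS.
apply/bigmax_leqP => i /asboolP hi; rewrite leqNgt; apply/negP => hir.
exact: hn (rank_ge_le hir hi).
Qed.

Lemma rank_le_of_rank_ge D1 D2 :
  (forall r, rank_ge m D1 r -> rank_ge m D2 r) -> rank m D1 <= rank m D2.
Proof.
move=> h; case: (ltrP (rank m D1) 0) => [|r_ge0].
  by have := rank_geN1 D1; have := rank_geN1 D2; lia.
by rewrite -(gez0_abs r_ge0); apply/rank_geP/h/rank_geP; rewrite gez0_abs.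
Qed.

Lemma rank_lin_equiv D E : lin_equiv m D E -> rank m D = rank m E.
Proof.
have rank_ge_lin r D' E' : lin_equiv m D' E' -> rank_ge m D' r -> rank_ge m E' r.
  by move=> hDE h F hF hdeg; apply: equiv_effective_lin_equiv (h F hF hdeg); apply: lin_equivDr.
move=> hDE; apply/eqP; rewrite eq_le !rank_le_of_rank_ge // => r; apply: rank_ge_lin => //.
exact: lin_equiv_sym.
Qed.

Lemma rank_deg_lt0 D : deg D < 0 -> rank m D = -1.
Proof.
by move=> hdeg; rewrite /rank; case: asboolP => // /equiv_effective_deg_ge0; rewrite leNgt hdeg.
Qed.

Lemma rank_subchip_le D w : rank m (D - chip w) <= rank m D.
Proof.
apply: rank_le_of_rank_ge => r h E hE hdeg; rewrite -[D](subrK (chip w)) addrAC.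
exact: equiv_effectiveD (h E hE hdeg) (effective_chipMn w 1).
Qed.

Lemma rank_subchip_ge D w : rank m D - 1 <= rank m (D - chip w).
Proof.
case: (ltrP (rank m D) 1) => [|r_gt0]; first by have := rank_geN1 (D - chip w); lia.
have -> : rank m D - 1 = `|rank m D - 1|%N by lia.
apply/rank_geP/rank_ge_chip/rank_geP; lia.
Qed.

End Rank.

(** * Riemann's inequality *)

Section Riemann.
Variables (V : finType) (m : V -> V -> nat).
Hypotheses (msym : forall x y, m x y = m y x) (mloop : forall x, m x x = 0%N)
  (mconn : forall x y, connect [rel a b | (0 < m a b)%N] x y).
Variable q : V.
Local Notation divisor := {ffun V -> int}.
Implicit Types (f z : V -> int) (w x y : V).

Definition laplacian f x : int := \sum_y (m x y)%:Z * (f y - f x).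

Lemma sum_fireE f x : (\sum_w fire m w *~ f w) x = laplacian f x.
Proof.
rewrite sum_ffunE /laplacian.
under eq_bigr do rewrite ffunMzE ffunE mulrzz mulrBl.
under [RHS]eq_bigr do rewrite mulrBr.
rewrite !sumrB; congr (_ - _); first by apply: eq_bigr => w _; rewrite msym.
rewrite (bigD1 x) //= eqxx big1 ?addr0 => [|y /negbTE]; last by rewrite eq_sym => ->; rewrite mul0r.
by rewrite -mulr_suml /valence Posz_sum.
Qed.

Lemma sum_fire_pairing (c z : V -> int) :
  \sum_x (\sum_w fire m w *~ c w) x * z x = \sum_w c w * laplacian z w.
Proof.
transitivity (\sum_x \sum_y ((m x y)%:Z * (c y * z x) - (m x y)%:Z * (c x * z x))).
  by apply: eq_bigr => x _; rewrite sum_fireE /laplacian mulr_suml; apply: eq_bigr => y _; ring.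
transitivity (\sum_w \sum_y ((m w y)%:Z * (c w * z y) - (m w y)%:Z * (c w * z w))); last first.
  by apply: eq_bigr => w _; rewrite /laplacian mulr_sumr; apply: eq_bigr => y _; ring.
under eq_bigr do rewrite sumrB.
under [RHS]eq_bigr do rewrite sumrB.
rewrite !sumrB exchange_big /=; congr (_ - _).
by apply: eq_bigr => x _; apply: eq_bigr => y _; rewrite msym.
Qed.

Lemma exists_edge_out (A : {set V}) a : a \in A -> q \notin A ->
  exists w x, [/\ w \in A, x \notin A & (0 < m w x)%N].
Proof.
move=> aA qA; have /connectP [p pth qlast] := mconn a q.
elim: p a aA pth qlast => [a aA _ qa|y p IH a aA /= /andP [ay py] qlast].
  by rewrite qa aA in qA.
have [yA|yA] := boolP (y \in A); first exact: IH yA py qlast.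
by exists a, y.
Qed.

Lemma strict_potential_on (A : {set V}) : q \notin A ->
  exists (z : V -> int) (M : int), [/\ forall x, 0 <= z x <= M,
    forall x, x \notin A -> z x = M & forall w, w \in A -> 1 <= laplacian z w].
Proof.
have [n] := ubnP #|A|; elim: n A => // n IH A hA qA.
have [->|[a aA]] := set_0Vmem A; first by exists (fun=> 0), 0; split=> // w; rewrite inE.
have [w0 [x1 [w0A x1A w0x1]]] := exists_edge_out aA qA.
have [||z [M [zb zout zlap]]] := IH (A :\ w0).
- by move: hA; rewrite (cardsD1 w0) w0A.
- by rewrite inE (negbTE qA) andbF.
have M_ge0 : 0 <= M by case/andP: (zb q) => /le_trans; apply.
have zw0 : z w0 = M by apply: zout; rewrite !inE eqxx.
pose K := M * (valence m w0)%:Z + 1.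
have K_ge1 : 1 <= K by rewrite lerDr mulr_ge0.
exists (fun x => if x \in A then z x else M + K), (M + K); split.
- by move=> x; case: ifP => _; [have := zb x | ]; lia.
- by move=> x /negbTE ->.
move=> w wA; rewrite /laplacian wA; have [->|ww0] := eqVneq w w0.
  rewrite zw0; apply: le_trans (_ : \sum_x ((m w0 x)%:Z * - M + (if x == x1 then K else 0)) <= _).
    rewrite big_split /= -big_mkcond big_pred1_eq -mulr_suml -Posz_sum -/(valence m w0).
    by rewrite /K; lia.
  apply: ler_sum => x _; have [->|_] := eqVneq x x1; first by rewrite (negbTE x1A); nia.
  by case: ifP => _; [have := zb x | ]; nia.
have wA' : w \in A :\ w0 by rewrite !inE ww0.
apply: le_trans (zlap w wA') _; apply: ler_sum => x _.
case: ifP => xA //; rewrite zout ?inE ?xA ?andbF //; have := zb w; nia.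
Qed.

Lemma strict_potential : exists (z : V -> int) (M : int),
  [/\ forall x, 0 <= z x <= M, z q = M & forall w, w != q -> 1 <= laplacian z w].
Proof.
have [|z [M [zb zout zlap]]] := @strict_potential_on [set~ q]; first by rewrite !inE eqxx.
by exists z, M; split=> [||w wq] //; [apply: zout; rewrite !inE eqxx | apply: zlap; rewrite !inE].
Qed.

(* A strict potential z makes [energy] grow whenever a set of vertices avoiding q is
   fired, and [energy] is bounded on divisors that are effective away from q. *)
Definition effective_away (F : divisor) := forall x, x != q -> 0 <= F x.

Section Energy.
Variable z : V -> int.

Definition energy (F : divisor) := \sum_x F x * z x.

Section BoundedPotential.
Variable M : int.
Hypotheses (zb : forall x, 0 <= z x <= M) (zq : z q = M)
  (zlap : forall w, w != q -> 1 <= laplacian z w).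

Lemma energy_le F : effective_away F -> energy F <= deg F * M.
Proof.
move=> hF; rewrite /deg mulr_suml; apply: ler_sum => x _.
have [->|xq] := eqVneq x q; first by rewrite zq.
by have := hF x xq; have := zb x; nia.
Qed.

Lemma exists_effective_away F : exists2 F', lin_equiv m F F' & effective_away F'.
Proof.
have [N N_ge0 FN] : exists2 N : int, 0 <= N & forall x, - F x <= N.
  exists (\sum_y `|F y|) => [|x]; first by apply: sumr_ge0 => y _; apply: normr_ge0.
  by rewrite (bigD1 x) //= -normrN (le_trans (ler_norm _)) // lerDl sumr_ge0.
exists (F + \sum_w fire m w *~ (N * z w)); first by exists (fun w => N * z w).
move=> x xq; rewrite divisorDE sum_fireE.
have -> : laplacian (fun w => N * z w) x = N * laplacian z x.
  by rewrite /laplacian mulr_sumr; apply: eq_bigr => y _; ring.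
by have := zlap xq; have := FN x; nia.
Qed.

Lemma exists_energy_max F : exists F', [/\ lin_equiv m F F', effective_away F' &
  forall F'', lin_equiv m F F'' -> effective_away F'' -> energy F'' <= energy F'].
Proof.
pose gap (F' : divisor) := absz (deg F * M - energy F')%R.
have [F0 FF0 F0a] := exists_effective_away F.
have ex : exists k, `[< exists F', [/\ lin_equiv m F F', effective_away F' & gap F' = k] >].
  by exists (gap F0); apply/asboolP; exists F0.
case: (ex_minnP ex) => _ /asboolP [F' [FF' F'a <-]] gap_min.
exists F'; split=> // F'' FF'' F''a.
have := gap_min (gap F'') (asboolT (ex_intro _ F'' (And3 FF'' F''a erefl))).
have := energy_le F'a; have := energy_le F''a.
by rewrite /gap (lin_equiv_deg FF') (lin_equiv_deg FF''); lia.
Qed.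

End BoundedPotential.

Section Burning.
Hypothesis zlap : forall w, w != q -> 1 <= laplacian z w.
Variable F : divisor.
Hypotheses (F_away : effective_away F)
  (F_max : forall F', lin_equiv m F F' -> effective_away F' -> energy F' <= energy F).

(* Dhar's burning algorithm: otherwise firing the unburnt vertices would raise the energy. *)
Lemma burning_step (B : {set V}) : q \in B -> B != setT ->
  exists2 x, x \notin B & F x < \sum_(y in B) (m x y)%:Z.
Proof.
move=> qB BT; apply: contrapT => no_x.
have Fx_ge x : x \notin B -> \sum_(y in B) (m x y)%:Z <= F x.
  by move=> xB; rewrite leNgt; apply/negP => Fx_lt; apply: no_x; exists x.
pose c w : int := if w \in B then 0 else 1.
pose F' := F + \sum_w fire m w *~ c w.
have F'_away : effective_away F'.
  move=> x xq; rewrite divisorDE sum_fireE /laplacian /c.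
  case xB : (x \in B).
    by rewrite addr_ge0 ?F_away // sumr_ge0 // => y _; rewrite mulr_ge0 //; case: ifP.
  rewrite (eq_bigr (fun y => - (if y \in B then (m x y)%:Z else 0))).
    by rewrite sumrN -big_mkcond subr_ge0 Fx_ge ?xB.
  by move=> y _; case: ifP; rewrite ?subrr ?mulr0 ?oppr0 // sub0r mulrN1.
have /subsetPn [x0 _ x0B] : ~~ ([set: V] \subset B) by rewrite subTset.
have energy_lt : energy F < energy F'.
  rewrite /energy /F'; under [X in _ < X]eq_bigr do rewrite divisorDE mulrDl.
  rewrite big_split /= sum_fire_pairing ltrDl (bigD1 x0) //= /c (negbTE x0B) mul1r.
  have x0q : x0 != q by apply: contraNneq x0B => ->.
  have rest_ge0 : 0 <= \sum_(w | w != x0) (if w \in B then 0 else 1) * laplacian z w.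
    apply: sumr_ge0 => w _; case: ifPn => wB; rewrite ?mul0r // mul1r.
    by apply: le_trans (zlap _); last by apply: contraNneq wB => ->.
  exact: ltr_wpDr rest_ge0 (lt_le_trans ltr01 (zlap x0q)).
have := F_max (ex_intro _ c erefl) F'_away; rewrite leNgt energy_lt //.
Qed.

Lemma burning_order k : (k < #|V|)%N -> exists B : {set V}, [/\ q \in B, #|B| = k.+1 &
  2 * (\sum_(y in B) F y - F q) + 2 * k%:Z <= \sum_(i in B) \sum_(j in B) (m i j)%:Z].
Proof.
elim: k => [_|k IH k_lt].
  exists [set q]; split; rewrite ?inE ?cards1 // !big_set1 mloop; lia.
have [B [qB cardB sumB]] := IH (ltnW k_lt).
have [|x xB Fx_lt] := burning_step qB.
  by apply/negP => /eqP BT; move: k_lt; rewrite -cardB BT cardsT ltnn.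
exists (x |: B); split; first by rewrite !inE qB orbT.
  by rewrite cardsU1 xB cardB.
rewrite !big_setU1 //= mloop.
have -> : \sum_(i in B) \sum_(j in x |: B) (m i j)%:Z =
    \sum_(i in B) ((m x i)%:Z + \sum_(j in B) (m i j)%:Z).
  by apply: eq_bigr => i _; rewrite big_setU1 //= msym.
rewrite big_split /=; move: sumB Fx_lt.
set SF := \sum_(i in B) F i; set Sx := \sum_(i in B) (m x i)%:Z.
set SB := \sum_(i in B) \sum_(j in B) (m i j)%:Z; lia.
Qed.

End Burning.
End Energy.

Lemma equiv_effective_of_genus_le (F : divisor) : genus m <= deg F -> equiv_effective m F.
Proof.
move=> genus_le.
have [z [M [zb zq zlap]]] := strict_potential.
have [F' [FF' F'_away F'_max]] := exists_energy_max zb zq zlap F.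
have V_gt0 : (0 < #|V|)%N by apply/card_gt0P; exists q.
have k_lt : (#|V|.-1 < #|V|)%N by rewrite ltn_predL.
have F'_max' F'' : lin_equiv m F' F'' -> effective_away F'' -> energy z F'' <= energy z F'.
  by move=> /(lin_equiv_trans FF'); apply: F'_max.
have [B [_ cardB sumB]] := burning_order zlap F'_away F'_max' k_lt.
have BT : B = setT by apply/eqP; rewrite eqEcard subsetT cardsT cardB prednK ?leqnn.
move: sumB; rewrite BT (eq_bigl _ _ (@in_setT V)) -/(deg F') (lin_equiv_deg FF').
under [X in _ <= X]eq_bigr do rewrite (eq_bigl _ _ (@in_setT V)) -Posz_sum.
rewrite (eq_bigl _ _ (@in_setT V)) -Posz_sum => sumV.
have F'q_ge0 : 0 <= F' q by move: genus_le sumV; rewrite /genus /num_edges; lia.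
exists F'; split=> // x; have [->|] := eqVneq x q; [exact: F'q_ge0 | exact: F'_away].
Qed.

Lemma rank_ge_deg_sub_genus (F : divisor) : deg F - genus m <= rank m F.
Proof.
case: (ltrP (deg F - genus m) 0) => [|r_ge0]; first by have := rank_geN1 m F; lia.
rewrite -(gez0_abs r_ge0); apply/(rank_geP m q) => E _ degE.
by apply: equiv_effective_of_genus_le; rewrite raddfB /= degE gez0_abs //; lia.
Qed.

End Riemann.

(** * Ranks of twists *)

Lemma exists_two_unit_steps (f : nat -> int) L :
  (forall n, f n.+1 <= f n + 1) -> (forall n, n%:Z + L <= f n) ->
  exists N, f N.+1 = f N + 1 /\ f N.+2 = f N.+1 + 1.
Proof.
move=> f_step f_ge.
suff steps k n : f n - n%:Z - L <= k%:Z -> exists N, f N.+1 = f N + 1 /\ f N.+2 = f N.+1 + 1.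
  by apply: (steps `|f 0%N - L|%N 0%N); lia.
elim: k n => [|k IH] n gap_le;
  have step0 := f_step n; have step1 := f_step n.+1; have ge2 := f_ge n.+2.
  by exists n; lia.
have [e1|/eqP ne1] := eqVneq (f n.+1) (f n + 1); last by apply: (IH n.+1); lia.
have [e2|/eqP ne2] := eqVneq (f n.+2) (f n.+1 + 1); first by exists n.
by apply: (IH n.+2); lia.
Qed.

Section StepFunctions.
Variable phi : int -> int.

Lemma homo_le_int_step : (forall x, phi (x - 1) <= phi x) -> {homo phi : x y / x <= y}.
Proof.
move=> phi_step x y le_xy; have [n ->] : exists n : nat, y = x + n%:Z by exists `|y - x|%N; lia.
elim: n => [|n IH]; first by rewrite addr0.
by apply: le_trans IH _; have := phi_step (x + n.+1%:Z); rewrite (_ : _ - 1 = x + n%:Z) //; lia.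
Qed.

Lemma exists_jump01 lo hi : lo <= hi -> (forall x, 0 <= phi x <= 1) ->
  phi lo = 0 -> phi hi = 1 -> exists x, phi (x - 1) = 0 /\ phi x = 1.
Proof.
move=> le_lohi phi01 phi_lo.
have [n ->] : exists n : nat, hi = lo + n%:Z by exists `|hi - lo|%N; lia.
elim: n => [|n IH]; first by rewrite addr0 phi_lo.
have [phi0|phi1] := eqVneq (phi (lo + n.+1%:Z - 1)) 0; first by exists (lo + n.+1%:Z).
rewrite (_ : _ - 1 = lo + n%:Z) in phi1; last by lia.
by move=> _; apply: IH; move: phi1 (phi01 (lo + n%:Z)) => /eqP; lia.
Qed.

Lemma jump01_uniq : (forall x, phi (x - 1) <= phi x) ->
  forall x y, phi (x - 1) = 0 -> phi x = 1 -> phi (y - 1) = 0 -> phi y = 1 -> x = y.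
Proof.
move=> /homo_le_int_step phi_homo x y phix0 phix1 phiy0 phiy1.
have [lt_xy|lt_yx|] := ltrgtP x y => //.
  by have := phi_homo x (y - 1); rewrite phix1 phiy0; lia.
by have := phi_homo y (x - 1); rewrite phiy1 phix0; lia.
Qed.

End StepFunctions.

(* [lia] compares atoms syntactically, while two occurrences of [f a] may differ in the
   instance paths of their arguments: abstract the applications of f up to conversion first. *)
Ltac lia_app f :=
  repeat match goal with H : context [f _] |- _ => revert H end;
  repeat match goal with
  | |- context [f ?a ?b] => let r := fresh "r" in move: (f a b) => r
  | |- context [f ?a] => let r := fresh "r" in move: (f a) => r
  end;
  lia.

Definition rank_delta (R : int -> int -> int) a b :=
  R a b - R (a - 1) b - R a (b + 1) + R (a - 1) (b + 1).

(* The properties of R a b := r(D + a u - b v) used below, for a submodular D on a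
   twice-marked graph with 2u ~ 2v, d = deg D and g the genus. *)
Record twist_ranks (d g : int) (R : int -> int -> int) : Prop := TwistRanks {
  twist_ranks_ustep : forall a b : int, 0 <= R a b - R (a - 1) b <= 1;
  twist_ranks_vstep : forall a b : int, 0 <= R a b - R a (b + 1) <= 1;
  twist_ranks_delta_ge0 : forall a b : int, 0 <= rank_delta R a b;
  twist_ranks_periodic : forall a b : int, R (a + 2) (b + 2) = R a b;
  twist_ranks_deg_lt0 : forall a b : int, d + a - b < 0 -> R a b = -1;
  twist_ranks_riemann : forall a b : int, d + a - b - g <= R a b }.

Section TwistRanks.
Variables (d g : int) (R : int -> int -> int).
Hypothesis hR : twist_ranks d g R.
Local Notation du a b := (R a b - R (a - 1) b).
Local Notation dv a b := (R a b - R a (b + 1)).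

Lemma twist_genus_ge0 : 0 <= g.
Proof.
have := twist_ranks_riemann hR 0 (d + 1); rewrite (twist_ranks_deg_lt0 hR); lia.
Qed.

Lemma dv_homo b : {homo (fun a => dv a b) : a a' / a <= a'}.
Proof.
apply: homo_le_int_step => a /=; have := twist_ranks_delta_ge0 hR a b.
by rewrite /rank_delta; lia_app R.
Qed.

Lemma rank_delta_eq1 a b : rank_delta R a b = 1 <-> dv (a - 1) b = 0 /\ dv a b = 1.
Proof.
have := twist_ranks_vstep hR a b; have := twist_ranks_vstep hR (a - 1) b.
by rewrite /rank_delta => ? ?; split; lia_app R.
Qed.

Lemma rank_delta01 a b : 0 <= rank_delta R a b <= 1.
Proof.
have := twist_ranks_delta_ge0 hR a b.
have := twist_ranks_vstep hR a b; have := twist_ranks_vstep hR (a - 1) b.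
by rewrite /rank_delta; lia_app R.
Qed.

Lemma rank_delta_periodic a b : rank_delta R (a + 2) (b + 2) = rank_delta R a b.
Proof.
rewrite /rank_delta (_ : a + 2 - 1 = a - 1 + 2); last by lia.
by rewrite (_ : b + 2 + 1 = b + 1 + 2) ?(twist_ranks_periodic hR) //; lia.
Qed.

(* Torsion turns a step in b into a step in a: R a (b + 2) = R (a - 2) b. *)
Lemma dv_sum a b : dv a b + dv a (b + 1) = du a b + du (a - 1) b.
Proof.
have per := twist_ranks_periodic hR (a - 1 - 1) b.
rewrite (_ : a - 1 - 1 + 2 = a) in per; last by lia.
rewrite (_ : b + 1 + 1 = b + 2); [lia_app R | lia].
Qed.

Lemma exists_rank_delta_col b : exists a, rank_delta R a b == 1.
Proof.
pose lo := b - d - 1.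
have dv_lo : dv lo b = 0 by rewrite !(twist_ranks_deg_lt0 hR) ?subrr /lo //; lia.
have [|n|N [step1 step2]] :=
  @exists_two_unit_steps (fun n => R (lo + n%:Z) b) (d + lo - b - g).
- move=> n /=; have := twist_ranks_ustep hR (lo + n.+1%:Z) b.
  by rewrite (_ : lo + n.+1%:Z - 1 = lo + n%:Z); [lia_app R | lia].
- by have := twist_ranks_riemann hR (lo + n%:Z) b; lia_app R.
pose a := lo + N.+2%:Z.
have a1 : a - 1 = lo + N.+1%:Z by rewrite /a; lia.
have a2 : a - 1 - 1 = lo + N%:Z by rewrite /a; lia.
have du_a : du a b = 1 by rewrite a1; move: step2 => /=; lia_app R.
have du_a1 : du (a - 1) b = 1 by rewrite a2 a1; move: step1 => /=; lia_app R.
have dv_a : dv a b = 1.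
  have := dv_sum a b; have := twist_ranks_vstep hR a b.
  by have := twist_ranks_vstep hR a (b + 1); lia_app R.
have [|x [dvx0 dvx1]] :=
  exists_jump01 (phi := fun a => dv a b) _ (fun a => twist_ranks_vstep hR a b) dv_lo dv_a.
  by rewrite /a; lia.
by exists x; apply/eqP/rank_delta_eq1.
Qed.

Lemma rank_delta_col_uniq a a' b : rank_delta R a b = 1 -> rank_delta R a' b = 1 -> a = a'.
Proof.
move=> /rank_delta_eq1 [dv0 dv1] /rank_delta_eq1 [dv0' dv1'].
by apply: (jump01_uniq (phi := fun a => dv a b)) dv0 dv1 dv0' dv1' => x; apply: dv_homo; lia.
Qed.

End TwistRanks.

Lemma rank_delta_swap R a b :
  rank_delta (fun a b => R (- b) (- a)) a b = rank_delta R (- b) (- a).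
Proof.
rewrite /rank_delta /=.
have -> : - (a - 1) = - a + 1 by lia.
have -> : - (b + 1) = - b - 1 by lia.
lia_app R.
Qed.

Lemma twist_ranks_swap d g R : twist_ranks d g R -> twist_ranks d g (fun a b => R (- b) (- a)).
Proof.
move=> hR; split=> a b /=.
- have -> : - (a - 1) = - a + 1 by lia.
  exact: twist_ranks_vstep hR (- b) (- a).
- have -> : - (b + 1) = - b - 1 by lia.
  have := twist_ranks_ustep hR (- b) (- a); lia_app R.
- by rewrite rank_delta_swap; apply: (twist_ranks_delta_ge0 hR).
- have -> : - (b + 2) = - b - 2 by lia.
  have -> : - (a + 2) = - a - 2 by lia.
  by rewrite -(twist_ranks_periodic hR) !subrK.
- by move=> hdeg; apply: (twist_ranks_deg_lt0 hR); lia.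
- by have := twist_ranks_riemann hR (- b) (- a); lia.
Qed.

Lemma int_halves (x : int) : exists i, x = 2 * i \/ x = 2 * i + 1.
Proof.
exists (x %/ 2)%Z; have := divz_eq x 2; have := modz_ge0 x (isT : 2 != 0 :> int).
by have := ltz_pmod x (isT : 0 < 2 :> int); lia.
Qed.

(** * The transmission permutation *)

Section Transmission.
Variables (d g : int) (R : int -> int -> int).
Hypothesis hR : twist_ranks d g R.

Lemma rank_delta_row_uniq a b b' : rank_delta R a b = 1 -> rank_delta R a b' = 1 -> b = b'.
Proof.
move=> hb hb'; apply: oppr_inj.
by apply: (rank_delta_col_uniq (twist_ranks_swap hR) (b := - a)); rewrite rank_delta_swap !opprK.
Qed.

Lemma exists_rank_delta_row a : exists b, rank_delta R a b == 1.
Proof.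
have [b] := exists_rank_delta_col (twist_ranks_swap hR) (- a).
by rewrite rank_delta_swap opprK; exists (- b).
Qed.

Definition transmission b : int := xchoose (exists_rank_delta_col hR b).

Lemma transmissionP b : rank_delta R (transmission b) b = 1.
Proof. exact/eqP/(xchooseP (exists_rank_delta_col hR b)). Qed.

Lemma transmission_delta a b : ((transmission b == a) : nat)%:Z = rank_delta R a b.
Proof.
have [<-|ne] := eqVneq (transmission b) a; first by rewrite transmissionP.
have := rank_delta01 hR a b; have : rank_delta R a b != 1.
  by apply: contra_neq ne => /(rank_delta_col_uniq hR (transmissionP b)).
by move=> /eqP; lia.
Qed.

Lemma transmission_bij : bijective transmission.
Proof.
pose row a : int := xchoose (exists_rank_delta_row a).
have rowP a : rank_delta R a (row a) = 1 by exact/eqP/(xchooseP (exists_rank_delta_row a)).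
exists row => [b | a]; first exact: rank_delta_row_uniq (rowP _) (transmissionP b).
by apply: (rank_delta_col_uniq hR (b := row a)); [apply: transmissionP | apply: rowP].
Qed.

Lemma transmission_periodic b : transmission (b + 2) = transmission b + 2.
Proof.
apply: (rank_delta_col_uniq hR (transmissionP _)).
by rewrite (rank_delta_periodic hR) transmissionP.
Qed.

Lemma transmission_lb b : b - d <= transmission b.
Proof.
have /(rank_delta_eq1 hR) [_] := transmissionP b.
case: (ltrP (d + transmission b - b) 0) => [neg|]; last by lia.
by rewrite !(twist_ranks_deg_lt0 hR) ?subrr //; lia.
Qed.

(* Below the jump in column b the v-steps vanish, so by periodicity the rank can grow at
   most by one per two units of a; Riemann's inequality then bounds the length of this range. *)
Lemma transmission_gap b : transmission b - transmission (b + 1) <= 2 * g.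
Proof.
pose A := transmission b - 1.
have /(rank_delta_eq1 hR) [dvA _] := transmissionP b.
have dv0 j : R (A - 2 * j%:Z) b = R (A - 2 * j%:Z) (b + 1).
  have := dv_homo hR b (_ : A - 2 * j%:Z <= A); have := twist_ranks_vstep hR (A - 2 * j%:Z) b.
  by rewrite /A dvA; lia_app R.
have chain (j : nat) : R A b <= R (A - 2 * j%:Z) b + j%:Z.
  elim: j => [|j IH]; first by rewrite mulr0 subr0 addr0.
  have := twist_ranks_vstep hR (A - 2 * j%:Z) (b + 1).
  have := twist_ranks_periodic hR (A - 2 * j.+1%:Z) b.
  have -> : A - 2 * j.+1%:Z + 2 = A - 2 * j%:Z by lia.
  have -> : b + 1 + 1 = b + 2 by lia.
  by move: (dv0 j) IH; lia_app R.
have lb := transmission_lb (b + 1); have g_ge0 := twist_genus_ge0 hR.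
case: (ltrP (d + A - b) 0) => [|s_ge0]; first by rewrite /A; lia.
have [i si] := int_halves (d + A - b).
have := chain `|i|.+1; rewrite [X in _ <= X + _](twist_ranks_deg_lt0 hR); last by lia.
by have := twist_ranks_riemann hR A b; rewrite /A; lia_app R.
Qed.

End Transmission.

Section Inversions.
Variables (tau : int -> int) (n : int).
Hypotheses (tau_periodic : forall b, tau (b + 2) = tau b + 2)
  (tau_gap : forall b, tau b - tau (b + 1) <= 2 * n) (n_ge0 : 0 <= n).

Lemma tau_shift b i : tau (b + 2 * i) = tau b + 2 * i.
Proof.
have shift_nat b' (k : nat) : tau (b' + 2 * k%:Z) = tau b' + 2 * k%:Z.
  elim: k => [|k IH]; first by rewrite mulr0 !addr0.
  have -> : b' + 2 * k.+1%:Z = b' + 2 * k%:Z + 2 by lia.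
  by rewrite tau_periodic IH; lia.
case: (lerP 0 i) => [i_ge0|i_lt0]; first by rewrite -(gez0_abs i_ge0) shift_nat.
have := shift_nat (b + 2 * i) `|i|%N; have -> : b + 2 * i + 2 * `|i|%N%:Z = b by lia.
lia_app tau.
Qed.

Lemma inv2_le : inv_k_le 2 tau n.
Proof.
pose inv (p : int * int) := (p.1 < p.2) && (tau p.2 < tau p.1).
pose cands : seq (int * int) :=
  if tau 1 < tau 0 then [seq (0 : int, 1 + 2 * k%:Z) | k <- iota 0 `|n|]
  else [seq (1 : int, 2 + 2 * k%:Z) | k <- iota 0 `|n|].
exists (filter inv cands); split; [|split].
- have : (count inv cands <= `|n|)%N.
    by apply: leq_trans (count_size _ _) _; rewrite /cands; case: ifP; rewrite size_map size_iota.
  by rewrite size_filter; lia.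
- by move=> p; rewrite mem_filter => /andP [/andP []].
move=> [p1 p2] [/= lt12 tlt].
have [i p1E] := int_halves p1; have [k [dE|dE]] := int_halves (p2 - p1).
  have := tau_shift p1 k; have -> : p1 + 2 * k = p2 by lia.
  by lia_app tau.
have p2E : p2 = p1 + 1 + 2 * k by lia.
have k_ge0 : 0 <= k by lia.
have [gap0 gap1] := (tau_gap 0, tau_gap 1).
have tau2 : tau 2 = tau 0 + 2 by rewrite -tau_periodic.
case: p1E => p1E.
- have t1 : tau p1 = tau 0 + 2 * i by rewrite p1E -tau_shift add0r.
  have t2 : tau p2 = tau 1 + 2 * (i + k) by rewrite -tau_shift p2E p1E; congr (tau _); lia.
  have lt10 : tau 1 < tau 0 by lia_app tau.
  exists (0, 1 + 2 * `|k|%N%:Z); last by split=> /=; [lia | apply/dvdzP; exists i; lia].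
  rewrite mem_filter /inv /cands lt10 /= tau_shift; apply/andP; split; first by lia_app tau.
  by apply: map_f; rewrite mem_iota; lia_app tau.
- have t1 : tau p1 = tau 1 + 2 * i by rewrite p1E -tau_shift addrC.
  have t2 : tau p2 = tau 0 + 2 + 2 * (i + k).
    by rewrite -tau2 -tau_shift p2E p1E; congr (tau _); lia.
  have le01 : ~~ (tau 1 < tau 0) by rewrite -leNgt; lia_app tau.
  exists (1, 2 + 2 * `|k|%N%:Z); last by split=> /=; [lia | apply/dvdzP; exists i; lia].
  rewrite mem_filter /inv /cands (negbTE le01) /= tau_shift tau2.
  apply/andP; split; first by lia_app tau.
  by apply: map_f; rewrite mem_iota; lia_app tau.
Qed.

End Inversions.

Section GraphTwists.
Variables (V : finType) (m : V -> V -> nat).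
Local Notation divisor := {ffun V -> int}.
Variables (u v : V) (D : divisor).

Definition twist a b : divisor := D + chip u *~ a - chip v *~ b.

Lemma twist_subu a b : twist a b - chip u = twist (a - 1) b.
Proof. by rewrite /twist mulrzBr mulr1z addrAC addrA. Qed.

Lemma twist_subv a b : twist a b - chip v = twist a (b + 1).
Proof. by rewrite /twist mulrzDr mulr1z opprD addrA. Qed.

Lemma twist_add2 a b : twist (a + 2) (b + 2) = chip u *+ 2 + twist a (b + 2).
Proof. apply/ffunP => x; rewrite !(ffunE, ffunMzE, ffunMnE) !mulrzz; ring. Qed.

Lemma twist_sub2 a b : twist a b = chip v *+ 2 + twist a (b + 2).
Proof. apply/ffunP => x; rewrite !(ffunE, ffunMzE, ffunMnE) !mulrzz; ring. Qed.

Lemma deg_twist a b : deg (twist a b) = deg D + a - b.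
Proof. rewrite /twist raddfB raddfD /= !raddfMz /= !deg_chip; lia. Qed.

End GraphTwists.

Section GraphTransmission.
Variables (V : finType) (m : V -> V -> nat).
Hypotheses (msym : forall x y, m x y = m y x) (mloop : forall x, m x x = 0%N)
  (mconn : forall x y, connect [rel a b | (0 < m a b)%N] x y).
Variables (u v : V) (D : {ffun V -> int}).
Hypotheses (torsion2 : lin_equiv m (chip u *+ 2) (chip v *+ 2)) (D_sub : submodular m u v D).

Definition twist_rank a b := rank m (twist u v D a b).

Lemma Delta_twist a b : Delta m u v (twist u v D a b) = rank_delta twist_rank a b.
Proof. by rewrite /Delta /rank_delta /twist_rank twist_subu !twist_subv. Qed.

Lemma twist_rank_ranks : twist_ranks (deg D) (genus m) twist_rank.
Proof.
split=> a b; rewrite /twist_rank.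
- rewrite -twist_subu; have := rank_subchip_le m u (twist u v D a b) u.
  by have := rank_subchip_ge m u (twist u v D a b) u; lia.
- rewrite -twist_subv; have := rank_subchip_le m u (twist u v D a b) v.
  by have := rank_subchip_ge m u (twist u v D a b) v; lia.
- rewrite -Delta_twist; have := D_sub a (- b).
  by rewrite /twist mulrNz.
- by rewrite twist_add2 [in RHS]twist_sub2; apply: (rank_lin_equiv u); apply: lin_equivDr.
- by move=> deg_lt0; rewrite rank_deg_lt0 // deg_twist.
- by rewrite -(deg_twist u v D a b); apply: rank_ge_deg_sub_genus msym mloop mconn u _.
Qed.

Lemma exists_transmission_perm :
  exists tau, is_transmission_perm m u v D tau /\ inv_k_le 2 tau (genus m).
Proof.
exists (transmission twist_rank_ranks); split.
  split=> [|a b]; first exact: transmission_bij.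
  by rewrite -[D + _ - _]/(twist u v D a b) Delta_twist transmission_delta.
apply: inv2_le; first exact: transmission_periodic.
  exact: transmission_gap.
exact: twist_genus_ge0 twist_rank_ranks.
Qed.

End GraphTransmission.

Theorem mainTheorem12 (V : finType) (m : V -> V -> nat) (u v : V) :
  is_graph m ->
  torsion_order m u v 2 ->
  (forall D : {ffun V -> int}, submodular m u v D) ->
  general_transmission m u v 2.
Proof.
move=> [msym mloop mconn] [_ torsion2 _] D_sub; split=> // D.
exact: (exists_transmission_perm msym mloop mconn torsion2) (D_sub D).
Qed.
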